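(* Let $(S,\mathcal C)$ be a connected connectoid and $T$ a normal tree of $(S,\mathcal C)$ rooted at $r$. Suppose every component in $\mathcal K(S\setminus V(T))$ has finite adhesion to $V(T)$. For every $K\in\mathcal K(S\setminus V(T))$ let $T_K$ be a (possibly empty) normal tree of the induced subconnectoid on $K$. Then there is a normal tree $T'$ of $(S,\mathcal C)$ rooted at $r$ with $T\subseteq T'$ such that $T'-T$ is the disjoint union of the trees $T_K$, $K\in\mathcal K(S\setminus V(T))$. Furthermore, if $T$ and all $T_K$ are rayless, then $T'$ is rayless.
   Context: A connectoid is given by a set $S$ and a set $\mathcal F$ of finite subsets of $S$ such that (i) $F\cup F'\in\mathcal F$ whenever $F,F'\in\mathcal F$ and $F\cap F'\neq\emptyset$, and (ii) $\emptyset\in\mathcal F$ and $\{s\}\in\mathcal F$ for every $s\in S$. A set $C\subseteq S$ is connected if for all $x,y\in C$ there is $F\in\mathcal F$ with $F\subseteq C$ and $x,y\in F$; $\mathcal C$ is the set of connected sets; $(S,\mathcal C)$ is connected if $S\in\mathcal C$. For $S'\subseteq S$, a component of $S'$ is a maximal connected subset, $\mathcal K(S')$ is the set of components, and the induced subconnectoid on $S'$ is $(S',\mathcal C\cap\mathcal P(S'))$. A component $K\in\mathcal K(S\setminus\hat S)$ has finite adhesion to $\hat S$ if there is a finite $X\subseteq\hat S$ with $K\in\mathcal K(S\setminus X)$. A necklace is a connected set $N$ for which there is a family $(H_n)_{n\in\mathbb N}$ of finite connected sets with $N=\bigcup_n H_n$ and $H_i\cap H_j\neq\emptyset$ iff $|i-j|\le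 1$. For a rooted tree $T$ with tree order $\le_T$ and $t\in V(T)$, let $\mathrm{Down}^\circ_T(t)=\{x\in V(T):x<_T t\}$. A weak normal tree of $(S,\mathcal C)$ is a rooted undirected tree $T$ with $V(T)\subseteq S$ such that (1) for every $C\in\mathcal C$ and every two $\le_T$-incomparable $u,v\in C\cap V(T)$ there is $w\in C$ with $w\le_T u$ and $w\le_T v$, and (2) for all $u\le_T v$ in $V(T)$ there is $C\in\mathcal C$ containing $u,v$ with $C\cap\mathrm{Down}^\circ_T(u)=\emptyset$. It is a normal tree if moreover for every rooted ray $R$ of $T$ some necklace contains all but finitely many vertices of $R$. A tree is rayless if it contains no ray. *)

From Stdlib Require Import List Arith.
Import ListNotations.

Section Defs.
Variable S : Type.

Definition subset (A B : S -> Prop) : Prop := forall x, A x -> B x.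

Definition finite (A : S -> Prop) : Prop :=
  exists l : list S, forall x, A x -> In x l.

(* A connectoid on the ground type S, given by a family F of finite sets.
   Sets are predicates; we require F to be extensional (closed under
   extensional equality), as a family of sets is. *)
Definition is_connectoid (F : (S -> Prop) -> Prop) : Prop :=
  (forall A, F A -> finite A) /\
  (forall A B, (forall x, A x <-> B x) -> F A -> F B) /\
  (forall A B, F A -> F B -> (exists x, A x /\ B x) ->
     F (fun x => A x \/ B x)) /\
  F (fun _ => False) /\
  (forall s, F (fun x => x = s)).

Definition connected (F : (S -> Prop) -> Prop) (C : S -> Prop) : Prop :=
  forall x y, C x -> C y -> exists A, F A /\ subset A C /\ A x /\ A y.

Definition component (Conn : (S -> Prop) -> Prop) (S' K : S -> Prop) : Prop :=
  subset K S' /\ Conn K /\ (exists x, K x) /\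
  (forall K', subset K K' -> subset K' S' -> Conn K' -> subset K' K).

Definition finite_adhesion (Conn : (S -> Prop) -> Prop) (Shat K : S -> Prop)
  : Prop :=
  exists X, finite X /\ subset X Shat /\ component Conn (fun x => ~ X x) K.

Definition necklace (Conn : (S -> Prop) -> Prop) (N : S -> Prop) : Prop :=
  Conn N /\
  exists H : nat -> S -> Prop,
    (forall n, finite (H n) /\ Conn (H n)) /\
    (forall x, N x <-> exists n, H n x) /\
    (forall i j, (exists x, H i x /\ H j x) <-> (i <= Datatypes.S j /\ j <= Datatypes.S i)).

Record rtree := RTree { tv : S -> Prop; te : S -> S -> Prop; troot : S }.

Inductive tpath (E : S -> S -> Prop) : S -> list S -> S -> Prop :=
| tp_one x : tpath E x [x] x
| tp_cons x y l z : E x y -> tpath E y l z -> tpath E x (x :: l) z.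

Definition is_rtree (T : rtree) : Prop :=
  (forall x y, te T x y -> te T y x) /\
  (forall x y, te T x y -> tv T x /\ tv T y /\ x <> y) /\
  (forall u v, tv T u -> tv T v ->
     exists l, (tpath (te T) u l v /\ NoDup l) /\
       forall l', tpath (te T) u l' v /\ NoDup l' -> l' = l) /\
  ((exists x, tv T x) -> tv T (troot T)).

Definition tle (T : rtree) (x y : S) : Prop :=
  tv T y /\ exists l, tpath (te T) (troot T) l y /\ NoDup l /\ In x l.

Definition tlt (T : rtree) (x y : S) : Prop := tle T x y /\ x <> y.

Definition ray (T : rtree) (f : nat -> S) : Prop :=
  (forall n, te T (f n) (f (Datatypes.S n))) /\
  (forall m n, f m = f n -> m = n).

Definition rooted_ray (T : rtree) (f : nat -> S) : Prop :=
  ray T f /\ f 0 = troot T.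

Definition rayless (T : rtree) : Prop := forall f, ~ ray T f.

Definition weak_normal_tree (G : S -> Prop) (Conn : (S -> Prop) -> Prop)
  (T : rtree) : Prop :=
  is_rtree T /\ subset (tv T) G /\
  (forall C, Conn C -> forall u v, C u -> C v -> tv T u -> tv T v ->
     ~ tle T u v -> ~ tle T v u ->
     exists w, C w /\ tle T w u /\ tle T w v) /\
  (forall u v, tv T u -> tv T v -> tle T u v ->
     exists C, Conn C /\ C u /\ C v /\ (forall x, C x -> ~ tlt T x u)).

Definition normal_tree (G : S -> Prop) (Conn : (S -> Prop) -> Prop)
  (T : rtree) : Prop :=
  weak_normal_tree G Conn T /\
  forall f, rooted_ray T f ->
    exists N, necklace Conn N /\ exists n0, forall n, n0 <= n -> N (f n).

Definition induced_conn (Conn : (S -> Prop) -> Prop) (S' : S -> Prop)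
  (C : S -> Prop) : Prop := Conn C /\ subset C S'.

Definition subtree (T T' : rtree) : Prop :=
  subset (tv T) (tv T') /\ (forall x y, te T x y -> te T' x y).

End Defs.

Arguments subset {S}. Arguments finite {S}. Arguments is_connectoid {S}.
Arguments connected {S}. Arguments component {S}. Arguments finite_adhesion {S}.
Arguments necklace {S}. Arguments tv {S}. Arguments te {S}. Arguments troot {S}.
Arguments RTree {S}. Arguments is_rtree {S}. Arguments tle {S}. Arguments tlt {S}.
Arguments ray {S}. Arguments rooted_ray {S}. Arguments rayless {S}.
Arguments weak_normal_tree {S}. Arguments normal_tree {S}.
Arguments induced_conn {S}. Arguments subtree {S}. Arguments tpath {S}.

(* Each component K of S - V(T) attaches to T at a single vertex t_K: the least vertices of T in
   the finite connected sets leaving K form a chain (normality of T applied to their union with K),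
   whose depth is bounded because all these sets meet the finite separator of K; let t_K be its top.
   Hanging T_K below t_K yields T'.  A connected set either lies in one K, where T_K is normal, or
   reaches T at or below t_K from inside K, so normality of T' reduces to that of T.  Going up in T'
   one never leaves a T_K, hence a rooted ray of T' either lies in T or ends as a rooted ray of some
   T_K, which provides its necklace; the same dichotomy shows that T' is rayless when T and all T_K
   are. *)

From Stdlib Require Import List Arith Lia Classical ClassicalEpsilon FunctionalExtensionality PropExtensionality.
Import ListNotations.

Lemma tpath_head {U} (E : U -> U -> Prop) x l z :
  tpath E x l z -> exists l', l = x :: l'.
Proof. intros H; destruct H; eauto. Qed.

Lemma tpath_first_in {U} (E : U -> U -> Prop) x l z : tpath E x l z -> In x l.
Proof. intros H; destruct H; simpl; auto. Qed.

Lemma tpath_last_in {U} (E : U -> U -> Prop) x l z : tpath E x l z -> In z l.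
Proof. induction 1; simpl; auto. Qed.

Lemma tpath_app {U} (E : U -> U -> Prop) x l1 y l2 z :
  tpath E x l1 y -> tpath E y (y :: l2) z -> tpath E x (l1 ++ l2) z.
Proof. induction 1; intros H2; simpl; [exact H2|econstructor; eauto]. Qed.

Lemma tpath_snoc {U} (E : U -> U -> Prop) x l y z :
  tpath E x l y -> E y z -> tpath E x (l ++ [z]) z.
Proof. intros H1 H2. apply tpath_app with y; auto. econstructor; eauto. constructor. Qed.

Lemma tpath_rev {U} (E : U -> U -> Prop) x l z :
  (forall a b, E a b -> E b a) -> tpath E x l z -> tpath E z (rev l) x.
Proof.
  intros Hs; induction 1; simpl; [constructor|].
  apply tpath_snoc with y; auto.
Qed.

Lemma tpath_split {U} (E : U -> U -> Prop) u l v x :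
  tpath E u l v -> In x l -> exists l1 l2, l = l1 ++ x :: l2 /\
    tpath E u (l1 ++ [x]) x /\ tpath E x (x :: l2) v.
Proof.
  induction 1; intros Hin.
  - destruct Hin as [<-|[]]. exists [], []. repeat split; constructor.
  - destruct (classic (x0 = x)) as [<-|Hne].
    + exists [], l. split; [reflexivity|]. split; [constructor|econstructor; eauto].
    + assert (Hl : In x l) by (destruct Hin; [congruence|auto]).
      destruct (IHtpath Hl) as (l1 & l2 & -> & P1 & P2).
      exists (x0 :: l1), l2. split; [reflexivity|]. split; [econstructor; eauto|auto].
Qed.

Lemma tpath_nodup {U} (E : U -> U -> Prop) u l v :
  tpath E u l v -> exists l', tpath E u l' v /\ NoDup l'.
Proof.
  induction 1.
  - exists [x]. split; [constructor|]. repeat constructor. intros [].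
  - destruct IHtpath as (l' & P & N).
    destruct (classic (In x l')) as [Hi|Hn].
    + destruct (tpath_split _ _ _ _ _ P Hi) as (l1 & l2 & -> & _ & P2).
      exists (x :: l2). split; auto. apply NoDup_app_remove_l in N. auto.
    + exists (x :: l'). split; [econstructor; eauto|constructor; auto].
Qed.

Lemma tpath_in {U} (E : U -> U -> Prop) (V : U -> Prop) u l v :
  (forall a b, E a b -> V a /\ V b) -> tpath E u l v -> V u -> forall w, In w l -> V w.
Proof.
  intros HE; induction 1; intros Hu w Hw; simpl in Hw.
  - destruct Hw as [<-|[]]; auto.
  - destruct Hw as [<-|Hw]; auto. apply IHtpath; auto. apply (HE _ _ H).
Qed.

(* Rooted trees encoded by a parent function [p] and a depth [d] decreasing towards the root [r]. *)
Definition parent_edge {U} (V : U -> Prop) (r : U) (p : U -> U) (x y : U) : Prop :=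
  V x /\ V y /\ ((x <> r /\ y = p x) \/ (y <> r /\ x = p y)).

Definition parent_repr {U} (V : U -> Prop) (E : U -> U -> Prop) (r : U)
  (p : U -> U) (d : U -> nat) : Prop :=
  V r /\ d r = 0 /\ (forall x, V x -> x <> r -> V (p x) /\ d x = S (d (p x))) /\
  (forall x y, E x y <-> parent_edge V r p x y).

Definition ancestor {U} (p : U -> U) (d : U -> nat) (x y : U) : Prop :=
  exists k, k <= d y /\ x = Nat.iter k p y.

Lemma ancestor_refl {U} (p : U -> U) d y : ancestor p d y y.
Proof. exists 0. split; [lia|reflexivity]. Qed.

Section ParentRepr.
Context {U : Type} {V : U -> Prop} {E : U -> U -> Prop} {r : U} {p : U -> U} {d : U -> nat}.
Hypothesis HP : parent_repr V E r p d.

Lemma parent_root_in : V r.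
Proof. apply HP. Qed.

Lemma parent_root_depth : d r = 0.
Proof. apply HP. Qed.

Lemma parent_step x : V x -> x <> r -> V (p x) /\ d x = S (d (p x)).
Proof. apply HP. Qed.

Lemma parent_edge_iff x y : E x y <-> parent_edge V r p x y.
Proof. apply HP. Qed.

Lemma parent_edge_in x y : E x y -> V x /\ V y.
Proof. intros H. apply parent_edge_iff in H. unfold parent_edge in H. tauto. Qed.

Lemma parent_edge_sym x y : E x y -> E y x.
Proof. rewrite !parent_edge_iff. unfold parent_edge. tauto. Qed.

Lemma parent_depth0 x : V x -> d x = 0 -> x = r.
Proof.
  intros Hx Hd. apply NNPP. intros Hne. destruct (parent_step x Hx Hne). lia.
Qed.

Lemma parent_iter y k : V y -> k <= d y ->
  V (Nat.iter k p y) /\ d (Nat.iter k p y) = d y - k.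
Proof.
  intros Hy. induction k as [|k IH]; intros Hk; simpl; [split; auto; lia|].
  destruct IH as [IV ID]; [lia|].
  assert (Hne : Nat.iter k p y <> r) by (intros Heq; rewrite Heq, parent_root_depth in ID; lia).
  destruct (parent_step _ IV Hne). split; auto. lia.
Qed.

Lemma parent_iter_root y : V y -> Nat.iter (d y) p y = r.
Proof.
  intros Hy. destruct (parent_iter y (d y) Hy (le_n _)).
  apply parent_depth0; auto. lia.
Qed.

Lemma ancestor_in x y : V y -> ancestor p d x y ->
  V x /\ d x <= d y /\ (d x = d y -> x = y).
Proof.
  intros Hy (k & Hk & ->). destruct (parent_iter y k Hy Hk).
  split; auto. split; [lia|]. intros Heq. replace k with 0 by lia. reflexivity.
Qed.

Lemma ancestor_trans x y z : V z -> ancestor p d x y -> ancestor p d y z -> ancestor p d x z.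
Proof.
  intros Hz (a & Ha & ->) (b & Hb & ->). destruct (parent_iter z b Hz Hb).
  exists (a + b). split; [lia|]. rewrite Nat.iter_add. reflexivity.
Qed.

Lemma ancestor_antisym x y : V y -> ancestor p d x y -> ancestor p d y x -> x = y.
Proof.
  intros Hy D1 D2. destruct (ancestor_in x y Hy D1) as (Vx & L1 & _).
  destruct (ancestor_in y x Vx D2) as (_ & L2 & Q). symmetry. apply Q. lia.
Qed.

Lemma ancestor_same_depth a b v : V v ->
  ancestor p d a v -> ancestor p d b v -> d a = d b -> a = b.
Proof.
  intros Hv (k1 & H1 & ->) (k2 & H2 & ->) Hd.
  destruct (parent_iter v k1 Hv H1) as [_ B1]. destruct (parent_iter v k2 Hv H2) as [_ B2].
  replace k2 with k1 by lia. reflexivity.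
Qed.

Lemma ancestor_parent z v : V v -> ancestor p d z v -> z <> r -> ancestor p d (p z) v.
Proof.
  intros Hv (k & Hk & ->) Hne. destruct (parent_iter v k Hv Hk) as [A B].
  assert (k + 1 <= d v).
  { apply NNPP. intros Hk'. apply Hne. apply parent_depth0; auto. lia. }
  exists (S k). split; [lia|reflexivity].
Qed.

Lemma ancestor_of_parent u y : V y -> y <> r -> ancestor p d u (p y) -> ancestor p d u y.
Proof.
  intros Hy Hne (k & Hk & ->). destruct (parent_step y Hy Hne).
  exists (S k). split; [lia|]. rewrite Nat.iter_succ_r. reflexivity.
Qed.

Lemma ancestor_proper u z : V z -> z <> r ->
  ancestor p d u z -> u <> z -> ancestor p d u (p z).
Proof.
  intros Hz Hne (k & Hk & ->) Hu. destruct k as [|k]; [simpl in Hu; congruence|].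
  destruct (parent_step z Hz Hne). exists k. split; [lia|]. rewrite Nat.iter_succ_r. reflexivity.
Qed.

(* A simple path that starts by going down from [y] stays in the subtree of [y]. *)
Lemma path_down_ancestors y l v : tpath E y l v -> y <> r -> V y -> NoDup (p y :: l) ->
  forall w, In w l -> ancestor p d w v.
Proof.
  induction 1 as [y|y z l v Hyz Hp IH]; intros Hne Hy ND w Hw.
  - destruct Hw as [<-|[]]. apply ancestor_refl.
  - pose proof (parent_edge_in _ _ Hyz) as [_ Vz].
    apply parent_edge_iff in Hyz. destruct Hyz as (_ & _ & [[_ ->]|[Hzr ->]]).
    + exfalso. inversion ND; subst. apply H1. right. eapply tpath_first_in; eauto.
    + assert (Vv : V v) by (apply (tpath_in E V z l v parent_edge_in Hp Vz); eapply tpath_last_in; eauto).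
      assert (IH' : forall w, In w l -> ancestor p d w v) by (apply IH; auto; inversion ND; auto).
      destruct Hw as [<-|Hw]; auto.
      apply ancestor_parent; auto. apply IH'. eapply tpath_first_in; eauto.
Qed.

Lemma path_enters_subtree y l v u : tpath E y l v -> V y ->
  ~ ancestor p d u y -> ancestor p d u v -> In u l.
Proof.
  induction 1 as [y|y z l v Hyz Hp IH]; intros Vy Hn Hd; [contradiction|].
  pose proof (parent_edge_in _ _ Hyz) as [_ Vz].
  destruct (classic (ancestor p d u z)) as [Dz|Dz]; [|right; apply IH; auto].
  apply parent_edge_iff in Hyz. destruct Hyz as (_ & _ & [[Hyr ->]|[Hzr ->]]).
  - exfalso. apply Hn. apply ancestor_of_parent; auto.
  - destruct (classic (u = z)) as [->|Huz]; [right; eapply tpath_first_in; eauto|].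
    exfalso. apply Hn. apply ancestor_proper; auto.
Qed.

Lemma path_first_step u y l v : V u -> E u y -> tpath E y l v -> NoDup (u :: l) ->
  (y = p u /\ ~ ancestor p d u v) \/ (u = p y /\ y <> r /\ ancestor p d y v).
Proof.
  intros Vu Euy P N. pose proof (parent_edge_in _ _ Euy) as [_ Vy].
  apply parent_edge_iff in Euy. destruct Euy as (_ & _ & [[Hur ->]|[Hyr ->]]).
  - left. split; auto. intros Dv.
    assert (Hn : ~ ancestor p d u (p u)).
    { intros Dp. destruct (ancestor_in u (p u) Vy Dp) as (_ & L & _).
      destruct (parent_step u Vu Hur). lia. }
    pose proof (path_enters_subtree _ _ _ u P Vy Hn Dv). inversion N; auto.
  - right. split; auto. split; auto.
    apply (path_down_ancestors y l v P Hyr Vy N). eapply tpath_first_in; eauto.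
Qed.

Lemma path_unique u l1 v : tpath E u l1 v -> NoDup l1 ->
  forall l2, tpath E u l2 v -> NoDup l2 -> l1 = l2.
Proof.
  induction 1 as [u|u y l1 v Hy Hp IH]; intros N1 l2 P2 N2.
  - inversion P2 as [|a b c e Hab Hp]; subst; auto. exfalso.
    inversion N2; subst. apply H1. eapply tpath_last_in; eauto.
  - inversion P2 as [|u' y2 l2' v' Hy2 Hp2]; subst.
    + exfalso. inversion N1; subst. apply H1. eapply tpath_last_in; eauto.
    + assert (Vu : V u) by apply (parent_edge_in _ _ Hy).
      assert (Vv : V v).
      { apply (tpath_in E V y l1 v parent_edge_in Hp); [apply (parent_edge_in _ _ Hy)|].
        eapply tpath_last_in; eauto. }
      assert (y = y2).
      { destruct (path_first_step u y l1 v Vu Hy Hp N1) as [[A B]|[A [B C]]];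
        destruct (path_first_step u y2 l2' v Vu Hy2 Hp2 N2) as [[A' B']|[A' [B' C']]].
        - congruence.
        - exfalso. apply B. rewrite A'. apply ancestor_parent; auto.
        - exfalso. apply B'. rewrite A. apply ancestor_parent; auto.
        - apply (ancestor_same_depth y y2 v Vv C C').
          destruct (parent_step y (proj2 (parent_edge_in _ _ Hy)) B) as [_ D1].
          destruct (parent_step y2 (proj2 (parent_edge_in _ _ Hy2)) B') as [_ D2]. congruence. }
      subst y2. f_equal. apply IH; [inversion N1| |inversion N2]; auto.
Qed.

Lemma path_to_root y : V y ->
  exists l, tpath E y l r /\ NoDup l /\ (forall k, k <= d y -> In (Nat.iter k p y) l)
            /\ (forall w, In w l -> d w <= d y).
Proof.
  remember (d y) as n eqn:Hn. revert y Hn.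
  induction n as [|n IH]; intros y Hn Vy.
  - assert (y = r) by (apply parent_depth0; auto). subst y.
    exists [r]. split; [constructor|]. split; [repeat constructor; intros []|].
    split; [intros k Hk; replace k with 0 by lia; left; reflexivity|intros w [<-|[]]; lia].
  - assert (Hne : y <> r) by (intros ->; rewrite parent_root_depth in Hn; lia).
    destruct (parent_step y Vy Hne) as [Vp Dp].
    destruct (IH (p y)) as (l & P & N & I & D); [lia|auto|].
    exists (y :: l). split.
    { apply tp_cons with (p y); [|exact P].
      apply parent_edge_iff. split; [auto|split; [auto|left; auto]]. }
    split; [constructor; auto; intros Hin; apply D in Hin; lia|]. split.
    + intros [|k] Hk; [left; reflexivity|]. right. rewrite Nat.iter_succ_r. apply I. lia.
    + intros w [<-|Hw]; [lia|]. apply D in Hw. lia.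
Qed.

Lemma parent_repr_rtree : is_rtree (RTree V E r).
Proof.
  unfold is_rtree; simpl. split; [exact parent_edge_sym|]. split.
  { intros x y Hxy. destruct (parent_edge_in _ _ Hxy) as [Vx Vy]. repeat split; auto.
    intros <-. apply parent_edge_iff in Hxy.
    destruct Hxy as (_ & _ & [[Hr Hq]|[Hr Hq]]);
      destruct (parent_step x Vx Hr) as [_ D]; rewrite <- Hq in D; lia. }
  split; [|intros _; exact parent_root_in].
  intros u v Vu Vv.
  destruct (path_to_root u Vu) as (l1 & P1 & _). destruct (path_to_root v Vv) as (l2 & P2 & _).
  apply (tpath_rev E) in P2; [|exact parent_edge_sym].
  assert (P : tpath E u (l1 ++ tl (rev l2)) v).
  { apply tpath_app with r; auto. destruct (tpath_head _ _ _ _ P2) as [l' Hl].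
    rewrite Hl in *. exact P2. }
  destruct (tpath_nodup E _ _ _ P) as (l & Pl & Nl).
  exists l. split; [auto|]. intros l' [P' N']. symmetry. apply (path_unique u l v Pl Nl l' P' N').
Qed.

Lemma rooted_ray_climbs (f : nat -> U) :
  (forall n, E (f n) (f (S n))) -> (forall m n, f m = f n -> m = n) -> f 0 = r ->
  forall m, f (S m) <> r /\ p (f (S m)) = f m.
Proof.
  intros HE Hi H0. induction m as [|m IH].
  - pose proof (HE 0) as E0. apply parent_edge_iff in E0. rewrite H0 in *.
    destruct E0 as (_ & _ & [[Hc _]|[Hn Hq]]); [congruence|auto].
  - pose proof (HE (S m)) as E0. apply parent_edge_iff in E0.
    destruct E0 as (_ & _ & [[Hn Hq]|[Hn Hq]]); auto.
    exfalso. rewrite (proj2 IH) in Hq. apply Hi in Hq. lia.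
Qed.

(* Depth cannot decrease forever, so a ray eventually only moves away from the root. *)
Lemma ray_eventually_climbs (f : nat -> U) :
  (forall n, E (f n) (f (S n))) -> (forall m n, f m = f n -> m = n) ->
  exists m0, forall j, f (S (m0 + j)) <> r /\ p (f (S (m0 + j))) = f (m0 + j).
Proof.
  intros HE Hi.
  destruct (classic (exists m, f (S m) <> r /\ p (f (S m)) = f m)) as [[m0 Hm0]|Hno].
  - exists m0. induction j as [|j IH]; [rewrite Nat.add_0_r; auto|].
    pose proof (HE (S (m0 + j))) as E0. apply parent_edge_iff in E0.
    destruct E0 as (_ & _ & [[Hn Hq]|[Hn Hq]]); [|rewrite <- plus_n_Sm; auto].
    exfalso. rewrite (proj2 IH) in Hq. apply Hi in Hq. lia.
  - exfalso.
    assert (Dn : forall m, d (f m) + m = d (f 0)).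
    { induction m as [|m IH]; [lia|].
      pose proof (HE m) as E0. apply parent_edge_iff in E0.
      destruct E0 as (Vm & _ & [[Hn Hq]|[Hn Hq]]).
      - destruct (parent_step _ Vm Hn) as [_ D]. rewrite <- Hq in D. lia.
      - exfalso. apply Hno. eauto. }
    pose proof (Dn (S (d (f 0)))). lia.
Qed.

End ParentRepr.

Section TreeOrder.
Context {U : Type} {T : rtree U} {p : U -> U} {d : U -> nat}.
Hypothesis HP : parent_repr (tv T) (te T) (troot T) p d.

Lemma tle_ancestor x y : tle T x y <-> tv T y /\ ancestor p d x y.
Proof.
  split.
  - intros (Vy & l & P & N & I). split; auto.
    inversion P as [a|a z l' b Haz Pz]; subst.
    + destruct I as [<-|[]]. apply ancestor_refl.
    + pose proof (parent_edge_in HP _ _ Haz) as [_ Vz].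
      apply (parent_edge_iff HP) in Haz. destruct Haz as (_ & _ & [[Hr _]|[Hzr Hq]]); [congruence|].
      destruct I as [<-|I].
      * exists (d y). split; auto. symmetry. apply (parent_iter_root HP y Vy).
      * apply (path_down_ancestors HP z l' y Pz Hzr Vz); auto. rewrite <- Hq. auto.
  - intros (Vy & k & Hk & ->). split; auto.
    destruct (path_to_root HP y Vy) as (l & P & N & I & _).
    exists (rev l). split; [apply tpath_rev; auto; exact (parent_edge_sym HP)|].
    split; [apply NoDup_rev; auto|]. apply in_rev. rewrite rev_involutive. apply I; auto.
Qed.

Lemma tle_in x y : tle T x y -> tv T x /\ tv T y.
Proof.
  intros H. apply tle_ancestor in H. destruct H as [Vy D].
  destruct (ancestor_in HP x y Vy D); auto.
Qed.

Lemma tle_refl x : tv T x -> tle T x x.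
Proof. intros Vx. apply tle_ancestor. split; auto. apply ancestor_refl. Qed.

Lemma tle_trans x y z : tle T x y -> tle T y z -> tle T x z.
Proof.
  rewrite !tle_ancestor. intros [Vy D1] [Vz D2].
  split; auto. exact (ancestor_trans HP x y z Vz D1 D2).
Qed.

Lemma tle_antisym x y : tle T x y -> tle T y x -> x = y.
Proof.
  rewrite !tle_ancestor. intros [Vy D1] [Vx D2]. exact (ancestor_antisym HP x y Vy D1 D2).
Qed.

Lemma tle_depth x y : tle T x y -> d x <= d y /\ (d x = d y -> x = y).
Proof.
  rewrite tle_ancestor. intros [Vy D]. destruct (ancestor_in HP x y Vy D) as (_ & A & B). auto.
Qed.

End TreeOrder.

Section RootPaths.
Context {U : Type} (T : rtree U).
Hypothesis RT : is_rtree T.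
Hypothesis Hr : tv T (troot T).

Definition root_path (x : U) : list U :=
  epsilon (inhabits []) (fun l => tpath (te T) x l (troot T) /\ NoDup l).

Definition path_parent (x : U) : U :=
  match root_path x with _ :: y :: _ => y | _ => x end.

Definition path_depth (x : U) : nat := length (root_path x) - 1.

Lemma simple_path_unique u v l l' : tv T u -> tv T v ->
  tpath (te T) u l v -> NoDup l -> tpath (te T) u l' v -> NoDup l' -> l = l'.
Proof.
  intros Vu Vv P N P' N'. destruct RT as (_ & _ & Hu & _).
  destruct (Hu u v Vu Vv) as (l0 & _ & U0). rewrite (U0 l), (U0 l'); auto.
Qed.

Lemma root_path_spec x : tv T x -> tpath (te T) x (root_path x) (troot T) /\ NoDup (root_path x).
Proof.
  intros Vx. unfold root_path. apply epsilon_spec. destruct RT as (_ & _ & Hu & _).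
  destruct (Hu x (troot T) Vx Hr) as (l & H & _). eauto.
Qed.

Lemma root_path_unique x l : tv T x -> tpath (te T) x l (troot T) -> NoDup l -> l = root_path x.
Proof.
  intros Vx P N. destruct (root_path_spec x Vx).
  apply (simple_path_unique x (troot T)); auto.
Qed.

Lemma root_path_root : root_path (troot T) = [troot T].
Proof.
  symmetry. apply root_path_unique; auto; [constructor|]. repeat constructor. intros [].
Qed.

Lemma root_path_step x : tv T x -> x <> troot T ->
  exists y l, root_path x = x :: y :: l /\ te T x y /\ root_path y = y :: l.
Proof.
  intros Vx Hne. destruct (root_path_spec x Vx) as [P N].
  remember (root_path x) as l0 eqn:Hl0.
  inversion P as [a Ha|a y l b Hxy Py Ha]; subst; [congruence|].
  destruct (tpath_head _ _ _ _ Py) as [l' Hl']. subst l.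
  exists y, l'. split; [congruence|]. split; auto.
  symmetry. apply root_path_unique; auto.
  - destruct RT as (_ & HEV & _). apply (HEV _ _ Hxy).
  - rewrite <- H0 in N. apply NoDup_cons_iff in N. tauto.
Qed.

Lemma te_path_parent x y : te T x y ->
  (x <> troot T /\ y = path_parent x) \/ (y <> troot T /\ x = path_parent y).
Proof.
  intros Hxy. destruct RT as (Hs & HEV & _).
  destruct (HEV _ _ Hxy) as (Vx & Vy & Hne).
  destruct (root_path_spec y Vy) as [Py Ny].
  destruct (classic (In x (root_path y))) as [Hin|Hnin].
  - right. destruct (tpath_split _ _ _ _ _ Py Hin) as (l1 & l2 & Heq & P1 & P2).
    assert (Hyx : l1 ++ [x] = [y; x]).
    { apply (simple_path_unique y x); auto.
      - rewrite Heq in Ny. replace (l1 ++ x :: l2) with ((l1 ++ [x]) ++ l2) in Ny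
          by (rewrite <- app_assoc; reflexivity).
        exact (NoDup_app_remove_r _ _ Ny).
      - econstructor; [apply Hs; eauto|constructor].
      - constructor; [intros [H|[]]; congruence|repeat constructor; intros []]. }
    change [y; x] with ([y] ++ [x]) in Hyx. apply app_inj_tail in Hyx. destruct Hyx as [-> _].
    split.
    + intros Hyr. rewrite Hyr, root_path_root in Heq. discriminate.
    + unfold path_parent. rewrite Heq. reflexivity.
  - left. assert (Hmx : root_path x = x :: root_path y).
    { symmetry. apply root_path_unique; auto; [econstructor; eauto|constructor; auto]. }
    destruct (tpath_head _ _ _ _ Py) as [l' Hl']. split.
    + intros Hxr. rewrite Hxr, root_path_root, Hl' in Hmx. discriminate.
    + unfold path_parent. rewrite Hmx, Hl'. reflexivity.
Qed.

Lemma rtree_parent_repr : parent_repr (tv T) (te T) (troot T) path_parent path_depth.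
Proof.
  split; [auto|]. split; [unfold path_depth; rewrite root_path_root; reflexivity|]. split.
  - intros x Vx Hne. destruct (root_path_step x Vx Hne) as (y & l & E1 & E2 & E3).
    unfold path_parent, path_depth. rewrite E1, E3.
    split; [destruct RT as (_ & HEV & _); apply (HEV _ _ E2)|simpl; lia].
  - intros x y. split.
    + intros Hxy. destruct RT as (_ & HEV & _). destruct (HEV _ _ Hxy) as (Vx & Vy & _).
      split; [auto|split; [auto|exact (te_path_parent x y Hxy)]].
    + intros (Vx & Vy & [[Hne Hq]|[Hne Hq]]).
      * destruct (root_path_step x Vx Hne) as (y' & l & E1 & E2 & _).
        unfold path_parent in Hq. rewrite E1 in Hq. subst; auto.
      * destruct (root_path_step y Vy Hne) as (x' & l & E1 & E2 & _).
        unfold path_parent in Hq. rewrite E1 in Hq. subst. destruct RT as (Hs & _). auto.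
Qed.

End RootPaths.

Lemma exists_min_measure {U} (P : U -> Prop) (g : U -> nat) :
  (exists x, P x) -> exists x, P x /\ forall y, P y -> g x <= g y.
Proof.
  intros [x0 H0]. remember (g x0) as n eqn:Hn. revert x0 H0 Hn.
  induction n as [n IH] using lt_wf_ind. intros x0 H0 Hn.
  destruct (classic (exists y, P y /\ g y < g x0)) as [[y [Py Ly]]|Hno].
  - apply (IH (g y)) with y; auto. lia.
  - exists x0. split; auto. intros y Py. apply NNPP. intros Hl. apply Hno. exists y. split; auto. lia.
Qed.

Lemma exists_max_measure {U} (P : U -> Prop) (g : U -> nat) B :
  (exists x, P x) -> (forall x, P x -> g x <= B) ->
  exists x, P x /\ forall y, P y -> g y <= g x.
Proof.
  intros [x0 H0] HB. remember (B - g x0) as n eqn:Hn. revert x0 H0 Hn.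
  induction n as [n IH] using lt_wf_ind. intros x0 H0 Hn.
  destruct (classic (exists y, P y /\ g x0 < g y)) as [[y [Py Ly]]|Hno].
  - apply (IH (B - g y)) with y; auto. pose proof (HB y Py). lia.
  - exists x0. split; auto. intros y Py. apply NNPP. intros Hl. apply Hno. exists y. split; auto. lia.
Qed.

Lemma list_measure_bound {U} (l : list U) (g : U -> nat) : exists B, forall x, In x l -> g x <= B.
Proof.
  induction l as [|a l [B HB]]; [exists 0; intros x []|].
  exists (max (g a) B). intros x [<-|Hx]; [lia|]. apply HB in Hx. lia.
Qed.

Lemma connected_of_F {U} {F : (U -> Prop) -> Prop} {A : U -> Prop} : F A -> connected F A.
Proof. intros FA x y Hx Hy. exists A. repeat split; auto. intros w; auto. Qed.

Section Connectoid.
Context {U : Type} {F : (U -> Prop) -> Prop}.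
Hypothesis HF : is_connectoid F.

Lemma connected_union (A B : U -> Prop) : connected F A -> connected F B ->
  (exists z, A z /\ B z) -> connected F (fun x => A x \/ B x).
Proof.
  destruct HF as (_ & _ & Hu & _). intros CA CB [z [Az Bz]].
  assert (Glue : forall x y C D, C x -> C z -> D z -> D y -> F C -> F D ->
            subset C (fun x => A x \/ B x) -> subset D (fun x => A x \/ B x) ->
            exists G, F G /\ subset G (fun x => A x \/ B x) /\ G x /\ G y).
  { intros x y C D Cx Cz Dz Dy FC FD SC SD. exists (fun w => C w \/ D w).
    split; [apply Hu; eauto|]. split; [intros w [Hw|Hw]; auto|auto]. }
  intros x y [Hx|Hx] [Hy|Hy].
  - destruct (CA x y Hx Hy) as (C & FC & SC & C1 & C2). exists C. split; [|split]; auto.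
    intros w Hw; left; auto.
  - destruct (CA x z Hx Az) as (C & FC & SC & C1 & C2). destruct (CB z y Bz Hy) as (D & FD & SD & D1 & D2).
    apply (Glue x y C D); auto; intros w Hw; [left; apply SC|right; apply SD]; auto.
  - destruct (CB x z Hx Bz) as (C & FC & SC & C1 & C2). destruct (CA z y Az Hy) as (D & FD & SD & D1 & D2).
    apply (Glue x y C D); auto; intros w Hw; [right; apply SC|left; apply SD]; auto.
  - destruct (CB x y Hx Hy) as (C & FC & SC & C1 & C2). exists C. split; [|split]; auto.
    intros w Hw; right; auto.
Qed.

Lemma component_unique S' K1 K2 : component (connected F) S' K1 -> component (connected F) S' K2 ->
  (exists x, K1 x /\ K2 x) -> K1 = K2.
Proof.
  intros (S1 & C1 & _ & M1) (S2 & C2 & _ & M2) Hx.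
  assert (CU : connected F (fun x => K1 x \/ K2 x)) by (apply connected_union; auto).
  assert (SU : subset (fun x => K1 x \/ K2 x) S') by (intros w [H|H]; auto).
  extensionality w. apply propositional_extensionality. split; intros Hw.
  - apply (M2 (fun x => K1 x \/ K2 x)); auto; intros a Ha; auto.
  - apply (M1 (fun x => K1 x \/ K2 x)); auto; intros a Ha; auto.
Qed.

Lemma component_exit S' K A : component (connected F) S' K -> connected F A ->
  (exists k, K k /\ A k) -> (exists y, A y /\ ~ K y) -> exists z, A z /\ ~ S' z.
Proof.
  intros (SK & CK & _ & MK) CA Hk [y [Ay Ky]].
  apply NNPP. intros Hno. apply Ky. apply (MK (fun x => K x \/ A x)).
  - intros a Ha; auto.
  - intros a [Ha|Ha]; auto. apply NNPP. intros Hs. apply Hno. eauto.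
  - apply connected_union; auto.
  - auto.
Qed.

End Connectoid.

Definition least_in {U} (T : rtree U) (A : U -> Prop) (m : U) : Prop :=
  A m /\ tv T m /\ forall a, A a -> tv T a -> tle T m a.

Section LeastVertex.
Context {U : Type} {G : U -> Prop} {Conn : (U -> Prop) -> Prop} {T : rtree U} {p : U -> U} {d : U -> nat}.
Hypothesis HP : parent_repr (tv T) (te T) (troot T) p d.
Hypothesis HW : weak_normal_tree G Conn T.

(* Take a vertex of minimal depth: by normality, anything incomparable to it would lie above a
   vertex of [A] of no larger depth. *)
Lemma least_in_exists A : Conn A -> (exists a, A a /\ tv T a) -> exists m, least_in T A m.
Proof.
  intros CA HA. destruct (exists_min_measure (fun a => A a /\ tv T a) d HA) as (m & [Am Vm] & Mm).
  exists m. split; auto. split; auto. intros a Aa Va.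
  apply NNPP. intros Hma.
  destruct (classic (tle T a m)) as [Ham|Ham].
  - destruct (tle_depth HP a m Ham) as [L Q]. pose proof (Mm a (conj Aa Va)).
    apply Hma. rewrite Q by lia. apply (tle_refl HP); auto.
  - destruct HW as (_ & _ & W1 & _).
    destruct (W1 A CA m a Am Aa Vm Va Hma Ham) as (w & Aw & Wm & Wa).
    destruct (tle_depth HP w m Wm) as [L Q]. pose proof (Mm w (conj Aw (proj1 (tle_in HP w m Wm)))).
    apply Hma. rewrite <- Q by lia. auto.
Qed.

End LeastVertex.

(* Otherwise normality, applied to the union of [A1], [K] and [A2], gives a vertex below [m] and [t],
   which can lie in none of the three. *)
Lemma least_in_comparable {U} G F (T : rtree U) p d K A1 A2 m t :
  is_connectoid F -> parent_repr (tv T) (te T) (troot T) p d -> weak_normal_tree G (connected F) T ->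
  connected F K -> (forall x, K x -> ~ tv T x) ->
  connected F A1 -> connected F A2 -> (exists k, K k /\ A1 k) -> (exists k, K k /\ A2 k) ->
  least_in T A1 m -> least_in T A2 t -> tle T m t \/ tle T t m.
Proof.
  intros HF HP (_ & _ & W1 & _) CK HKT C1 C2 [k1 [K1 A1k]] [k2 [K2 A2k]] (A1m & Vm & M1) (A2t & Vt & M2).
  apply NNPP. intros Hinc.
  set (C := fun x => (A1 x \/ K x) \/ A2 x).
  assert (CC : connected F C).
  { apply (connected_union HF); [apply (connected_union HF); eauto|auto|].
    exists k2. split; [right|]; auto. }
  destruct (W1 C CC m t (or_introl (or_introl A1m)) (or_intror A2t) Vm Vt)
    as (w & Cw & Wm & Wt); try (intro; apply Hinc; auto).
  destruct (tle_in HP w m Wm) as [Vw _].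
  destruct Cw as [[Cw|Cw]|Cw].
  - apply Hinc. left. replace m with w by (apply (tle_antisym HP); auto). auto.
  - exact (HKT w Cw Vw).
  - apply Hinc. right. replace t with w by (apply (tle_antisym HP); auto). auto.
Qed.

Definition crosses {U} (F : (U -> Prop) -> Prop) (K A : U -> Prop) : Prop :=
  F A /\ (exists k, K k /\ A k) /\ (exists y, A y /\ ~ K y).

(* [t] is the top of the chain of least vertices of the sets of [F] crossing the boundary of [K];
   the tree of [K] will hang below it. *)
Definition attachment {U} (F : (U -> Prop) -> Prop) (T : rtree U) (K : U -> Prop) (t : U) : Prop :=
  (exists A, crosses F K A /\ least_in T A t) /\
  (forall A, crosses F K A -> exists w, A w /\ tv T w /\ tle T w t).

(* Every crossing set meets the finite separator of [K], which bounds the depth of the chain. *)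
Lemma attachment_exists {U} G F (T : rtree U) p d K :
  is_connectoid F -> connected F (fun _ => True) ->
  parent_repr (tv T) (te T) (troot T) p d -> weak_normal_tree G (connected F) T ->
  component (connected F) (fun x => ~ tv T x) K -> finite_adhesion (connected F) (tv T) K ->
  exists t, attachment F T K t.
Proof.
  intros HF HS HP HW HK (X & [lX HlX] & SX & HKX).
  pose proof HK as (SK & CK & [k0 Kk0] & _).
  assert (crossX : forall A, crosses F K A -> exists x, A x /\ X x).
  { intros A (FA & Hk & Hy).
    destruct (component_exit HF _ K A HKX (connected_of_F FA) Hk Hy) as [z [Az Hz]].
    exists z. split; auto. apply NNPP; auto. }
  assert (least : forall A, crosses F K A -> exists m, least_in T A m).
  { intros A HA. apply (least_in_exists HP HW); [apply connected_of_F, HA|].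
    destruct (crossX A HA) as [x [Ax Xx]]. eauto. }
  set (M := fun m => exists A, crosses F K A /\ least_in T A m).
  destruct (list_measure_bound lX d) as [B HB].
  destruct (exists_max_measure M d B) as (t & Mt & Tmax).
  { destruct (HS k0 (troot T) I I) as (A & FA & _ & Ak & Ar).
    assert (HA : crosses F K A).
    { split; auto. split; eauto. exists (troot T). split; auto.
      intros Kr. exact (SK _ Kr (parent_root_in HP)). }
    destruct (least A HA) as [m Hm]. exists m, A. auto. }
  { intros m (A & HA & Am & Vm & Hm). destruct (crossX A HA) as [x [Ax Xx]].
    destruct (tle_depth HP m x (Hm x Ax (SX x Xx))) as [L _]. pose proof (HB x (HlX x Xx)). lia. }
  assert (below : forall m, M m -> tle T m t).
  { intros m (A1 & HA1 & L1). destruct Mt as (A2 & HA2 & L2).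
    assert (Hmt : d m <= d t) by (apply Tmax; exists A1; auto).
    destruct HA1 as (FA1 & HK1 & _). destruct HA2 as (FA2 & HK2 & _).
    destruct (least_in_comparable G F T p d K A1 A2 m t HF HP HW CK (fun x Kx => SK x Kx)
                (connected_of_F FA1) (connected_of_F FA2) HK1 HK2 L1 L2) as [H|H]; auto.
    destruct (tle_depth HP t m H) as [L Q].
    replace t with m by (symmetry; apply Q; lia). apply (tle_refl HP), (proj1 (proj2 L1)). }
  exists t. split; [exact Mt|]. intros A HA. destruct (least A HA) as [m Hm].
  exists m. destruct Hm as (Am & Vm & Hm'). split; [auto|split; [auto|]].
  apply below. exists A. split; [auto|split; auto].
Qed.

Lemma necklace_induced {U} (Conn : (U -> Prop) -> Prop) K N :
  necklace (induced_conn Conn K) N -> necklace Conn N.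
Proof.
  intros [[CN _] (H & HH & HN & HI)]. split; auto. exists H. split; [|auto].
  intros j. destruct (HH j) as [Hf [Hc _]]. auto.
Qed.

Section Gluing.
Context {U : Type} (F : (U -> Prop) -> Prop) (T : rtree U) (TK : (U -> Prop) -> rtree U)
  (pT : U -> U) (dT : U -> nat) (tK : (U -> Prop) -> U)
  (pK : (U -> Prop) -> U -> U) (dK : (U -> Prop) -> U -> nat).

Local Notation comp K := (component (connected F) (fun x => ~ tv T x) K).

Hypothesis HF : is_connectoid F.
Hypothesis HT : normal_tree (fun _ => True) (connected F) T.
Hypothesis PT : parent_repr (tv T) (te T) (troot T) pT dT.
Hypothesis HTK : forall K, comp K -> normal_tree K (induced_conn (connected F) K) (TK K).
Hypothesis PK : forall K x, comp K -> tv (TK K) x ->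
  parent_repr (tv (TK K)) (te (TK K)) (troot (TK K)) (pK K) (dK K).
Hypothesis HtK : forall K, comp K -> attachment F T K (tK K).

Lemma TK_in_K K x : comp K -> tv (TK K) x -> K x.
Proof. intros HK Hx. destruct (HTK K HK) as ((_ & Hs & _) & _). apply Hs; auto. Qed.

Lemma K_not_T K x : comp K -> K x -> ~ tv T x.
Proof. intros (SK & _) Kx. apply SK; auto. Qed.

Lemma TK_not_T K x : comp K -> tv (TK K) x -> ~ tv T x.
Proof. intros HK Hx. apply (K_not_T K); auto. apply TK_in_K; auto. Qed.

Lemma tK_in K : comp K -> tv T (tK K).
Proof. intros HK. destruct (HtK K HK) as ((A & _ & _ & Vt & _) & _). auto. Qed.

Definition block (x : U) : U -> Prop :=
  epsilon (inhabits (fun _ => False)) (fun K => comp K /\ tv (TK K) x).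

Lemma block_eq K x : comp K -> tv (TK K) x -> block x = K.
Proof.
  intros HK Hx.
  assert (Hb : comp (block x) /\ tv (TK (block x)) x) by (unfold block; apply epsilon_spec; eauto).
  destruct Hb as [HB Bx]. apply (component_unique HF _ _ _ HB HK).
  exists x. split; apply TK_in_K; auto.
Qed.

Definition glued_vertex (x : U) : Prop := tv T x \/ exists K, comp K /\ tv (TK K) x.

Definition glued_parent (x : U) : U :=
  if excluded_middle_informative (tv T x) then pT x
  else if excluded_middle_informative (x = troot (TK (block x))) then tK (block x)
  else pK (block x) x.

Definition glued_depth (x : U) : nat :=
  if excluded_middle_informative (tv T x) then dT x
  else dT (tK (block x)) + S (dK (block x) x).

Definition glued_tree : rtree U :=
  RTree glued_vertex (parent_edge glued_vertex (troot T) glued_parent) (troot T).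

Lemma glued_parent_T x : tv T x -> glued_parent x = pT x.
Proof. intros Hx. unfold glued_parent. destruct (excluded_middle_informative (tv T x)); tauto. Qed.

Lemma glued_depth_T x : tv T x -> glued_depth x = dT x.
Proof. intros Hx. unfold glued_depth. destruct (excluded_middle_informative (tv T x)); tauto. Qed.

Lemma glued_parent_TK_root K : comp K -> tv (TK K) (troot (TK K)) ->
  glued_parent (troot (TK K)) = tK K.
Proof.
  intros HK Hx. unfold glued_parent.
  destruct (excluded_middle_informative (tv T _)) as [h|h]; [exfalso; apply (TK_not_T K _ HK Hx h)|].
  rewrite (block_eq K _ HK Hx). destruct (excluded_middle_informative _); tauto.
Qed.

Lemma glued_parent_TK K x : comp K -> tv (TK K) x -> x <> troot (TK K) -> glued_parent x = pK K x.
Proof.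
  intros HK Hx Hq. unfold glued_parent.
  destruct (excluded_middle_informative (tv T x)) as [h|h]; [exfalso; apply (TK_not_T K x HK Hx h)|].
  rewrite (block_eq K x HK Hx). destruct (excluded_middle_informative _); tauto.
Qed.

Lemma glued_depth_TK K x : comp K -> tv (TK K) x -> glued_depth x = dT (tK K) + S (dK K x).
Proof.
  intros HK Hx. unfold glued_depth.
  destruct (excluded_middle_informative (tv T x)) as [h|h]; [exfalso; apply (TK_not_T K x HK Hx h)|].
  rewrite (block_eq K x HK Hx). reflexivity.
Qed.

Lemma glued_parent_repr :
  parent_repr (tv glued_tree) (te glued_tree) (troot glued_tree) glued_parent glued_depth.
Proof.
  simpl. split; [left; exact (parent_root_in PT)|].
  split; [rewrite glued_depth_T by exact (parent_root_in PT); exact (parent_root_depth PT)|].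
  split; [|intros; reflexivity].
  intros x [Hx|(K & HK & Hx)] Hne.
  - destruct (parent_step PT x Hx Hne).
    rewrite glued_parent_T, !glued_depth_T by auto. split; [left|]; auto.
  - pose proof (PK K x HK Hx) as PKK.
    destruct (classic (x = troot (TK K))) as [->|Hq].
    + rewrite (glued_parent_TK_root K HK Hx), (glued_depth_TK K _ HK Hx), (glued_depth_T _ (tK_in K HK)).
      rewrite (parent_root_depth PKK). split; [left; apply tK_in; auto|lia].
    + destruct (parent_step PKK x Hx Hq) as [A B].
      rewrite (glued_parent_TK K x HK Hx Hq), (glued_depth_TK K x HK Hx), (glued_depth_TK K _ HK A).
      split; [right; eauto|lia].
Qed.

Lemma glued_iter_T y k : tv T y -> k <= dT y -> Nat.iter k glued_parent y = Nat.iter k pT y.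
Proof.
  intros Vy. induction k as [|k IH]; intros Hk; [reflexivity|].
  simpl. rewrite IH by lia. apply glued_parent_T. apply (parent_iter PT y k Vy). lia.
Qed.

Lemma glued_iter_TK K y k : comp K -> tv (TK K) y -> k <= dK K y ->
  Nat.iter k glued_parent y = Nat.iter k (pK K) y.
Proof.
  intros HK Vy. pose proof (PK K y HK Vy) as PKK. induction k as [|k IH]; intros Hk; [reflexivity|].
  simpl. rewrite IH by lia. destruct (parent_iter PKK y k Vy) as [A B]; [lia|].
  apply glued_parent_TK; auto. intros Hq. rewrite Hq, (parent_root_depth PKK) in B. lia.
Qed.

Lemma glued_iter_TK_T K y j : comp K -> tv (TK K) y -> j <= dT (tK K) ->
  Nat.iter (j + S (dK K y)) glued_parent y = Nat.iter j pT (tK K).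
Proof.
  intros HK Vy Hj. pose proof (PK K y HK Vy) as PKK.
  rewrite Nat.iter_add. simpl. rewrite (glued_iter_TK K y (dK K y) HK Vy (le_n _)).
  rewrite (parent_iter_root PKK y Vy), (glued_parent_TK_root K HK (parent_root_in PKK)).
  apply glued_iter_T; auto. apply tK_in; auto.
Qed.

Lemma glued_tle_T x y : tv T y -> (tle glued_tree x y <-> tle T x y).
Proof.
  intros Vy. rewrite (tle_ancestor glued_parent_repr), (tle_ancestor PT).
  unfold ancestor. rewrite (glued_depth_T y Vy). split.
  - intros [_ (k & Hk & ->)]. split; auto. exists k. split; auto. apply glued_iter_T; auto.
  - intros [_ (k & Hk & ->)]. split; [left; auto|]. exists k. split; auto. symmetry; apply glued_iter_T; auto.
Qed.

Lemma glued_tle_TK K x y : comp K -> tv (TK K) y ->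
  (tle glued_tree x y <-> tle (TK K) x y \/ tle T x (tK K)).
Proof.
  intros HK Vy. pose proof (PK K y HK Vy) as PKK. pose proof (tK_in K HK) as Vt.
  rewrite (tle_ancestor glued_parent_repr), (tle_ancestor PKK), (tle_ancestor PT).
  unfold ancestor. rewrite (glued_depth_TK K y HK Vy). split.
  - intros [_ (k & Hk & ->)]. destruct (le_lt_dec k (dK K y)) as [L|L].
    + left. split; auto. exists k. split; auto. apply glued_iter_TK; auto.
    + right. split; auto. exists (k - S (dK K y)). split; [lia|].
      rewrite <- (glued_iter_TK_T K y) by (auto; lia). f_equal. lia.
  - intros [[_ (k & Hk & ->)]|[_ (j & Hj & ->)]]; (split; [right; eauto|]).
    + exists k. split; [lia|]. symmetry; apply glued_iter_TK; auto.
    + exists (j + S (dK K y)). split; [lia|]. symmetry; apply glued_iter_TK_T; auto.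
Qed.

Lemma glued_edge_T x y : tv T x -> tv T y -> (te glued_tree x y <-> te T x y).
Proof.
  intros Vx Vy. simpl. rewrite (parent_edge_iff PT). unfold parent_edge.
  rewrite (glued_parent_T x Vx), (glued_parent_T y Vy). split.
  - intros (_ & _ & C). auto.
  - intros (_ & _ & C). split; [left; auto|]. split; [left; auto|]. auto.
Qed.

Lemma glued_child_TK K x y : comp K -> tv (TK K) x -> glued_vertex y -> y <> troot T ->
  glued_parent y = x -> tv (TK K) y /\ te (TK K) x y.
Proof.
  intros HK Kx [Ty|(K' & HK' & Ky)] Hne Hq.
  - exfalso. rewrite (glued_parent_T y Ty) in Hq. apply (TK_not_T K x HK Kx). rewrite <- Hq.
    apply (parent_step PT); auto.
  - pose proof (PK K' y HK' Ky) as PKK.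
    destruct (classic (y = troot (TK K'))) as [Hr|Hr].
    + exfalso. subst y. rewrite (glued_parent_TK_root K' HK' Ky) in Hq.
      apply (TK_not_T K x HK Kx). rewrite <- Hq. apply tK_in; auto.
    + rewrite (glued_parent_TK K' y HK' Ky Hr) in Hq. destruct (parent_step PKK y Ky Hr) as [A _].
      rewrite Hq in A. assert (K' = K) by (apply (block_eq K' x HK') in A; rewrite <- A; apply block_eq; auto).
      subst K'. split; auto. apply (parent_edge_iff PKK). split; [auto|split; [auto|right; auto]].
Qed.

Lemma glued_edge_TK x y : ~ tv T x -> ~ tv T y ->
  (te glued_tree x y <-> exists K, comp K /\ te (TK K) x y).
Proof.
  intros Hx Hy. split.
  - intros Exy. pose proof Exy as (Vx & Vy & _).
    assert (Hc : forall a b, ~ tv T a -> glued_vertex a -> glued_vertex b -> b <> troot T ->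
              glued_parent b = a -> exists K, comp K /\ te (TK K) a b).
    { intros a b Ha [Ta|(K & HK & Ka)] Vb Hb Hab; [contradiction|].
      exists K. split; auto. apply (glued_child_TK K a b); auto. }
    destruct Exy as (_ & _ & [[Hne Hq]|[Hne Hq]]).
    + destruct (Hc y x Hy Vy Vx Hne (eq_sym Hq)) as (K & HK & E). exists K. split; auto.
      destruct (HTK K HK) as (((Hs & _) & _) & _). auto.
    + apply (Hc x y); auto.
  - intros (K & HK & Exy). destruct (HTK K HK) as (((_ & HEV & _) & _) & _).
    destruct (HEV x y Exy) as (Vx & Vy & _). pose proof (PK K x HK Vx) as PKK.
    assert (Hr : forall z, tv (TK K) z -> z <> troot T).
    { intros z Hz ->. apply (TK_not_T K _ HK Hz). exact (parent_root_in PT). }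
    apply (parent_edge_iff PKK) in Exy. destruct Exy as (_ & _ & [[Hne Hq]|[Hne Hq]]).
    + split; [right; eauto|]. split; [right; eauto|]. left. split; [apply Hr; auto|].
      rewrite (glued_parent_TK K x HK Vx Hne). auto.
    + split; [right; eauto|]. split; [right; eauto|]. right. split; [apply Hr; auto|].
      rewrite (glued_parent_TK K y HK Vy Hne). auto.
Qed.

Lemma glued_climbing_ray (g : nat -> U) : (forall j, glued_vertex (g j)) ->
  (forall j, g (S j) <> troot T /\ glued_parent (g (S j)) = g j) ->
  (forall j, te T (g j) (g (S j))) \/
  exists n K, comp K /\ (forall j, j < n -> tv T (g j)) /\ (forall j, tv (TK K) (g (n + j))) /\
    (forall j, te (TK K) (g (n + j)) (g (S (n + j)))).
Proof.
  intros HV Hup. destruct (classic (forall j, tv T (g j))) as [AllT|H].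
  - left. intros j. destruct (Hup j) as [Hne Hq]. apply glued_edge_T; auto.
    split; [left; auto|split; [left; auto|right; auto]].
  - right. apply not_all_ex_not in H.
    destruct (exists_min_measure (fun j => ~ tv T (g j)) (fun j => j) H) as (n & Hn & Mn).
    destruct (HV n) as [Tn|(K & HK & Kn)]; [contradiction|].
    assert (Step : forall j, tv (TK K) (g (n + j)) ->
              tv (TK K) (g (S (n + j))) /\ te (TK K) (g (n + j)) (g (S (n + j)))).
    { intros j Kj. destruct (Hup (n + j)) as [Hne Hq]. apply (glued_child_TK K); auto. }
    assert (Hblk : forall j, tv (TK K) (g (n + j))).
    { induction j as [|j IH]; [rewrite Nat.add_0_r; auto|]. rewrite <- plus_n_Sm. apply Step; auto. }
    exists n, K. split; auto. split.
    + intros j Hj. apply NNPP. intros Hc. pose proof (Mn j Hc). lia.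
    + split; auto. intros j. apply Step; auto.
Qed.

Lemma glued_rooted_ray_necklace f : rooted_ray glued_tree f ->
  exists N, necklace (connected F) N /\ exists n0, forall n, n0 <= n -> N (f n).
Proof.
  intros [[HE Hi] H0]. simpl in H0.
  assert (HV : forall j, glued_vertex (f j))
    by (intros j; exact (proj1 (parent_edge_in glued_parent_repr _ _ (HE j)))).
  pose proof (rooted_ray_climbs glued_parent_repr f HE Hi H0) as Hup.
  destruct (glued_climbing_ray f HV Hup) as [ET|(n & K & HK & Bn & Bk & Be)].
  - destruct HT as (_ & HNT). apply HNT. split; [split|]; auto.
  - destruct n as [|n].
    + exfalso. pose proof (Bk 0) as B. simpl in B. rewrite H0 in B.
      exact (TK_not_T K _ HK B (parent_root_in PT)).
    + assert (Hroot : f (S n) = troot (TK K)).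
      { pose proof (Bk 0) as B. rewrite Nat.add_0_r in B. apply NNPP. intros Hne.
        destruct (Hup n) as [_ Hq]. rewrite (glued_parent_TK K _ HK B Hne) in Hq.
        destruct (parent_step (PK K _ HK B) _ B Hne) as [A _]. rewrite Hq in A.
        apply (TK_not_T K _ HK A), Bn. lia. }
      destruct (HTK K HK) as (_ & HNK).
      destruct (HNK (fun j => f (S n + j))) as (N & HN & n0 & Hn0).
      { split; [split|].
        - intros j. rewrite <- plus_n_Sm. apply Be.
        - intros a b Hab. apply Hi in Hab. lia.
        - simpl. rewrite Nat.add_0_r. auto. }
      exists N. split; [exact (necklace_induced _ _ _ HN)|].
      exists (S n + n0). intros m Hm. replace m with (S n + (m - S n)) by lia. apply Hn0. lia.
Qed.

Lemma glued_rayless : rayless T -> (forall K, comp K -> rayless (TK K)) -> rayless glued_tree.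
Proof.
  intros RLT RLK f [HE Hi].
  destruct (ray_eventually_climbs glued_parent_repr f HE Hi) as [m0 Hm0].
  set (g := fun j => f (m0 + j)).
  assert (HV : forall j, glued_vertex (g j))
    by (intros j; exact (proj1 (parent_edge_in glued_parent_repr _ _ (HE (m0 + j))))).
  assert (Hup : forall j, g (S j) <> troot T /\ glued_parent (g (S j)) = g j)
    by (intros j; unfold g; rewrite <- plus_n_Sm; apply Hm0).
  assert (Hig : forall a b, g a = g b -> a = b) by (intros a b Hab; apply Hi in Hab; lia).
  destruct (glued_climbing_ray g HV Hup) as [ET|(n & K & HK & _ & _ & Be)].
  - exact (RLT g (conj ET Hig)).
  - apply (RLK K HK (fun j => g (n + j))). split.
    + intros j. rewrite <- plus_n_Sm. apply Be.
    + intros a b Hab. apply Hig in Hab. lia.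
Qed.

(* By the choice of [tK K], the part of [C] leaving [K] reaches [T] at or below [tK K], which lies
   below every vertex of [TK K]. *)
Lemma glued_anchor C z : connected F C -> C z -> glued_vertex z ->
  (forall K, comp K -> exists y, C y /\ ~ K y) -> exists w, C w /\ tv T w /\ tle glued_tree w z.
Proof.
  intros CC Cz [Tz|(K & HK & Kz)] Hleave.
  - exists z. split; auto. split; auto. apply (tle_refl glued_parent_repr). left; auto.
  - destruct (Hleave K HK) as (y & Cy & Ky). destruct (CC z y Cz Cy) as (A & FA & SA & Az & Ay).
    destruct (HtK K HK) as (_ & Hcross).
    destruct (Hcross A) as (w & Aw & Tw & Hw).
    { split; [auto|split; [exists z; split; [apply TK_in_K|]; auto|eauto]]. }
    exists w. split; [apply SA; auto|]. split; auto. apply (glued_tle_TK K w z HK Kz). right; auto.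
Qed.

Lemma glued_common_lower C u v w1 w2 : connected F C -> C w1 -> C w2 -> tv T w1 -> tv T w2 ->
  tle glued_tree w1 u -> tle glued_tree w2 v -> exists w, C w /\ tle glued_tree w u /\ tle glued_tree w v.
Proof.
  intros CC C1 C2 T1 T2 L1 L2. pose proof glued_parent_repr as P'.
  destruct (classic (tle T w1 w2)) as [H|H].
  - exists w1. split; auto. split; auto. apply (tle_trans P' w1 w2 v); auto. apply glued_tle_T; auto.
  - destruct (classic (tle T w2 w1)) as [H'|H'].
    + exists w2. split; auto. split; [|auto]. apply (tle_trans P' w2 w1 u); auto. apply glued_tle_T; auto.
    + destruct HT as ((_ & _ & W1T & _) & _).
      destruct (W1T C CC w1 w2 C1 C2 T1 T2 H H') as (w & Cw & A & B).
      exists w. split; auto. split.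
      * apply (tle_trans P' w w1 u); auto. apply glued_tle_T; auto.
      * apply (tle_trans P' w w2 v); auto. apply glued_tle_T; auto.
Qed.

Lemma glued_separation C : connected F C -> forall u v, C u -> C v ->
  tv glued_tree u -> tv glued_tree v -> ~ tle glued_tree u v -> ~ tle glued_tree v u ->
  exists w, C w /\ tle glued_tree w u /\ tle glued_tree w v.
Proof.
  intros CC u v Cu Cv Vu Vv Nuv Nvu.
  destruct (classic (exists K, comp K /\ subset C K)) as [(K & HK & SC)|Hno].
  - assert (InK : forall z, C z -> glued_vertex z -> tv (TK K) z).
    { intros z Cz [Tz|(K' & HK' & Kz)]; [exfalso; exact (K_not_T K z HK (SC z Cz) Tz)|].
      replace K with K'; auto. apply (component_unique HF _ _ _ HK' HK).
      exists z. split; [apply TK_in_K|apply SC]; auto. }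
    pose proof (InK u Cu Vu) as Ku. pose proof (InK v Cv Vv) as Kv.
    rewrite (glued_tle_TK K u v HK Kv) in Nuv. rewrite (glued_tle_TK K v u HK Ku) in Nvu.
    destruct (HTK K HK) as ((_ & _ & W1K & _) & _).
    destruct (W1K C (conj CC SC) u v Cu Cv Ku Kv) as (w & Cw & A & B); [tauto|tauto|].
    exists w. rewrite (glued_tle_TK K w u HK Ku), (glued_tle_TK K w v HK Kv). auto.
  - assert (Hleave : forall K, comp K -> exists y, C y /\ ~ K y).
    { intros K HK. apply NNPP. intros Hn. apply Hno. exists K. split; auto.
      intros y Cy. apply NNPP. intros Ky. apply Hn. eauto. }
    destruct (glued_anchor C u CC Cu Vu Hleave) as (w1 & C1 & T1 & L1).
    destruct (glued_anchor C v CC Cv Vv Hleave) as (w2 & C2 & T2 & L2).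
    exact (glued_common_lower C u v w1 w2 CC C1 C2 T1 T2 L1 L2).
Qed.

Lemma glued_down_attach K u v : comp K -> tv (TK K) v -> tle T u (tK K) ->
  exists C, connected F C /\ C u /\ C v /\ (forall x, C x -> ~ tlt glued_tree x u).
Proof.
  intros HK Kv Hut. destruct (tle_in PT u _ Hut) as [Tu Tt].
  destruct HT as ((_ & _ & _ & W2T) & _).
  destruct (W2T u (tK K) Tu Tt Hut) as (C1 & CC1 & C1u & C1t & HC1).
  destruct (HtK K HK) as ((A0 & (FA0 & (k & Kk & A0k) & _) & A0t & _ & HA0) & _).
  pose proof HK as (_ & CK & _).
  exists (fun x => (C1 x \/ A0 x) \/ K x). split.
  { apply (connected_union HF); [apply (connected_union HF); [auto|apply connected_of_F; auto|eauto]|auto|].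
    exists k. split; [right|]; auto. }
  split; [left; left; auto|]. split; [right; apply (TK_in_K K); auto|].
  intros x Cx [Hle Hne]. apply (glued_tle_T x u Tu) in Hle. destruct (tle_in PT x u Hle) as [Tx _].
  destruct Cx as [[Cx|Cx]|Cx].
  - apply (HC1 x Cx). split; auto.
  - apply Hne. apply (tle_antisym PT); auto. apply (tle_trans PT u (tK K) x); auto.
  - exact (K_not_T K x HK Cx Tx).
Qed.

Lemma glued_down_connected u v : tv glued_tree u -> tv glued_tree v -> tle glued_tree u v ->
  exists C, connected F C /\ C u /\ C v /\ (forall x, C x -> ~ tlt glued_tree x u).
Proof.
  intros _ [Tv|(K & HK & Kv)] Huv.
  - apply (glued_tle_T u v Tv) in Huv. destruct (tle_in PT u v Huv) as [Tu _].
    destruct HT as ((_ & _ & _ & W2T) & _).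
    destruct (W2T u v Tu Tv Huv) as (C & CC & Cu & Cv & HC).
    exists C. split; auto. split; auto. split; auto.
    intros x Cx [Hle Hne]. apply (HC x Cx). split; auto. apply (glued_tle_T x u Tu); auto.
  - apply (glued_tle_TK K u v HK Kv) in Huv. destruct Huv as [Huv|Huv]; [|apply (glued_down_attach K); auto].
    destruct (tle_in (PK K v HK Kv) u v Huv) as [Ku _].
    destruct (HTK K HK) as ((_ & _ & _ & W2K) & _).
    destruct (W2K u v Ku Kv Huv) as (C & [CC SC] & Cu & Cv & HC).
    exists C. split; auto. split; auto. split; auto.
    intros x Cx [Hle Hne]. apply (glued_tle_TK K x u HK Ku) in Hle. destruct Hle as [Hle|Hle].
    + apply (HC x Cx). split; auto.
    + destruct (tle_in PT x _ Hle) as [Tx _]. exact (K_not_T K x HK (SC x Cx) Tx).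
Qed.

Lemma glued_normal : normal_tree (fun _ => True) (connected F) glued_tree.
Proof.
  split; [|exact glued_rooted_ray_necklace].
  split; [exact (parent_repr_rtree glued_parent_repr)|]. split; [intros x _; exact I|].
  split; [exact glued_separation|exact glued_down_connected].
Qed.

Lemma glued_tree_spec :
  normal_tree (fun _ => True) (connected F) glued_tree /\
  troot glued_tree = troot T /\ tv glued_tree (troot T) /\ subtree T glued_tree /\
  (forall x, tv glued_tree x /\ ~ tv T x <-> exists K, comp K /\ tv (TK K) x) /\
  (forall x y, ~ tv T x -> ~ tv T y -> (te glued_tree x y <-> exists K, comp K /\ te (TK K) x y)) /\
  (rayless T -> (forall K, comp K -> rayless (TK K)) -> rayless glued_tree).
Proof.
  split; [exact glued_normal|]. split; [reflexivity|]. split; [left; exact (parent_root_in PT)|].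
  split.
  { split; [intros x Hx; left; auto|]. intros x y Exy.
    destruct (parent_edge_in PT x y Exy) as [Vx Vy]. apply glued_edge_T; auto. }
  split.
  { intros x. simpl. unfold glued_vertex. split.
    - intros [[H|H] H']; [contradiction|auto].
    - intros (K & HK & Hx). split; [right; eauto|]. apply (TK_not_T K); auto. }
  split; [exact glued_edge_TK|exact glued_rayless].
Qed.

End Gluing.

Theorem proposition6p3 (S : Type) (F : (S -> Prop) -> Prop) (r : S)
  (T : rtree S) (TK : (S -> Prop) -> rtree S) :
  is_connectoid F ->
  connected F (fun _ => True) ->
  normal_tree (fun _ => True) (connected F) T ->
  troot T = r -> tv T r ->
  (forall K, component (connected F) (fun x => ~ tv T x) K ->
     finite_adhesion (connected F) (tv T) K) ->
  (forall K, component (connected F) (fun x => ~ tv T x) K ->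
     normal_tree K (induced_conn (connected F) K) (TK K)) ->
  exists T' : rtree S,
    normal_tree (fun _ => True) (connected F) T' /\
    troot T' = r /\ tv T' r /\
    subtree T T' /\
    (forall x, tv T' x /\ ~ tv T x <->
       exists K, component (connected F) (fun x => ~ tv T x) K /\ tv (TK K) x) /\
    (forall x y, ~ tv T x -> ~ tv T y ->
       (te T' x y <->
        exists K, component (connected F) (fun x => ~ tv T x) K /\ te (TK K) x y)) /\
    (rayless T ->
     (forall K, component (connected F) (fun x => ~ tv T x) K -> rayless (TK K)) ->
     rayless T').
Proof.
  intros HF HS HT <- Hr HFA HTK.
  pose proof (rtree_parent_repr T (proj1 (proj1 HT)) Hr) as PT.
  destruct (choice (fun K t => component (connected F) (fun x => ~ tv T x) K -> attachment F T K t))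
    as [tK HtK].
  { intros K. destruct (classic (component (connected F) (fun x => ~ tv T x) K)) as [HK|HK].
    - destruct (attachment_exists _ F T _ _ K HF HS PT (proj1 HT) HK (HFA K HK)) as [t Ht]. eauto.
    - exists (troot T). contradiction. }
  eexists. apply (glued_tree_spec F T TK _ _ tK (fun K => path_parent (TK K)) (fun K => path_depth (TK K))
                  HF HT PT HTK); auto.
  intros K x HK Hx. destruct (HTK K HK) as ((RK & _) & _).
  apply rtree_parent_repr; auto. apply RK. eauto.
Qed.
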